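(* Let $f: \mathbb{R}^n \to \mathbb{R}^n$ be topical and $\lambda \in \mathbb{R}$. Let $i = i_1 \to i_2 \to \cdots \to i_k = j$ be a directed path in $\mathcal{G}(f)$. Then for all $x \in \mathbb{R}^n$, if $f(x) \le \lambda + x$ and $x \ge 0$, then $$x_j \le h^\lambda_{i_k i_{k-1}} \circ \cdots \circ h^\lambda_{i_2 i_1}(x_i).$$
   Context: $f$ is topical if $f(x+h) = f(x)+h$ for all $h\in\mathbb{R}$ (scalar added to each coordinate) and $x\le y$ componentwise implies $f(x)\le f(y)$. $e_{\{j\}}$ is the $j$-th standard basis vector. $\mathcal{G}(f)$ is the directed graph on $\{1,\dots,n\}$ with an edge $i\to j$ iff $\lim_{u\to\infty} f_i(u e_{\{j\}}) = \infty$. For each edge $i\to j$ define $h_{ji}: \mathbb{R}\cup\{-\infty\} \to \mathbb{R}\cup\{-\infty\}$ by $h_{ji}(x) = \sup\{u \in \mathbb{R} : f_i(u e_{\{j\}}) \le x\}$ (with $\sup\emptyset = -\infty$; it is $<\infty$ because of the edge), and $h^\lambda_{ji}(x) = h_{ji}(\lambda + x)$. *)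

From HB Require Import structures.
From mathcomp Require Import all_boot all_order all_algebra.
From mathcomp Require Import all_classical all_reals all_analysis.
Set Implicit Arguments. Unset Strict Implicit. Unset Printing Implicit Defensive.
Import Order.TTheory GRing.Theory Num.Theory.
Local Open Scope ring_scope.
Local Open Scope classical_set_scope.

Definition topical (R : realType) (n : nat) (f : ('I_n -> R) -> ('I_n -> R)) : Prop :=
  (forall (x : 'I_n -> R) (h : R) (k : 'I_n), f (fun l => x l + h) k = f x k + h) /\
  (forall x y : 'I_n -> R, (forall k, x k <= y k) -> forall k, f x k <= f y k).

Definition uvec (R : realType) (n : nat) (j : 'I_n) (u : R) : 'I_n -> R :=
  fun l => if l == j then u else 0.

Definition gedge (R : realType) (n : nat) (f : ('I_n -> R) -> ('I_n -> R)) (i j : 'I_n) : Prop :=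
  (f (uvec j u) i) @[u --> +oo] --> +oo.

(* h_{ji}(x) = sup { u in R | f_i (u e_j) <= x }, on R ∪ {-oo} (embedded in \bar R) *)
Definition hfun (R : realType) (n : nat) (f : ('I_n -> R) -> ('I_n -> R)) (j i : 'I_n)
  (x : \bar R) : \bar R :=
  ereal_sup [set (u%:E) | u in [set u : R | ((f (uvec j u) i)%:E <= x)%E]].

Definition hlam (R : realType) (n : nat) (f : ('I_n -> R) -> ('I_n -> R)) (lam : R)
  (j i : 'I_n) (x : \bar R) : \bar R :=
  hfun f j i (lam%:E + x)%E.

(* directed path i = i_1 -> i_2 -> ... -> i_k, given as start i and list [i_2; ...; i_k] *)
Fixpoint is_gpath (R : realType) (n : nat) (f : ('I_n -> R) -> ('I_n -> R))
  (i : 'I_n) (p : seq 'I_n) : Prop :=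
  match p with
  | [::] => True
  | k :: p' => gedge f i k /\ is_gpath f k p'
  end.

Fixpoint hpath (R : realType) (n : nat) (f : ('I_n -> R) -> ('I_n -> R)) (lam : R)
  (i : 'I_n) (p : seq 'I_n) (x : \bar R) : \bar R :=
  match p with
  | [::] => x
  | k :: p' => hpath f lam k p' (hlam f lam k i x)
  end.

From HB Require Import structures.
From mathcomp Require Import all_boot all_order all_algebra.
From mathcomp Require Import all_classical all_reals all_analysis.
Import Order.TTheory GRing.Theory Num.Theory.
Local Open Scope ring_scope.

(* Monotonicity alone does the work: for x >= 0 we have x_k e_k <= x, so
   f_i(x_k e_k) <= f_i(x) <= lambda + x_i, i.e. x_k lies in the set whose
   supremum defines h^lambda_{ki}(x_i).  Iterating along the path gives the
   bound; the edges of the path only guarantee that the h's are finite. *)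

Lemma uvec_le {R : realType} {n : nat} (x : 'I_n -> R) (k : 'I_n) :
  (forall l, 0 <= x l) -> forall l, uvec k (x k) l <= x l.
Proof. by move=> x_ge0 l; rewrite /uvec; case: eqP => [->|]. Qed.

Section SubeigenvectorBound.

Variables (R : realType) (n : nat) (f : ('I_n -> R) -> ('I_n -> R)) (lam : R).
Hypothesis f_mono :
  forall x y : 'I_n -> R, (forall k, x k <= y k) -> forall k, f x k <= f y k.
Variable x : 'I_n -> R.
Hypothesis x_sub : forall k, f x k <= lam + x k.
Hypothesis x_ge0 : forall k, 0 <= x k.

Lemma coord_le_hlam (i k : 'I_n) (y : \bar R) :
  ((x i)%:E <= y)%E -> ((x k)%:E <= hlam f lam k i y)%E.
Proof.
move=> xi_le_y; apply: ereal_sup_ubound; exists (x k) => //=.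
have fk_le : f (uvec k (x k)) i <= lam + x i.
  exact: le_trans (f_mono _ _ (uvec_le x k x_ge0) i) (x_sub i).
apply: le_trans (leeD2l lam%:E xi_le_y).
by rewrite -EFinD lee_fin.
Qed.

Lemma last_le_hpath (p : seq 'I_n) (i : 'I_n) (y : \bar R) :
  ((x i)%:E <= y)%E -> ((x (last i p))%:E <= hpath f lam i p y)%E.
Proof.
elim: p i y => [|k p IHp] i y xi_le_y //=.
exact/IHp/coord_le_hlam.
Qed.

End SubeigenvectorBound.

Theorem lemma3p2 (R : realType) (n : nat) (f : ('I_n -> R) -> ('I_n -> R))
  (lam : R) (i : 'I_n) (p : seq 'I_n) :
  topical f -> is_gpath f i p ->
  forall x : 'I_n -> R,
    (forall k, f x k <= lam + x k) -> (forall k, 0 <= x k) ->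
    ((x (last i p))%:E <= hpath f lam i p (x i)%:E)%E.
Proof.
move=> [_ f_mono] _ x x_sub x_ge0.
exact: last_le_hpath.
Qed.
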